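(* Let $X$ be a singular rational normal scroll with $\operatorname{codim}(V,X)=2$ and let $D_1,D_2$ be effective Weil divisors on $X$, with associated numbers $\epsilon_1,\epsilon_2$. Then $(D_1+D_2)^*=D_1^*+D_2^*$ if $\epsilon_1+\epsilon_2<1$, and $(D_1+D_2)^*=D_1^*+D_2^*-E$ if $\epsilon_1+\epsilon_2\ge1$.
   Context: Setup. Fix integers $r\ge 2$, $f\ge 2$, let $\tilde X=\mathbb P(\mathcal O_{\mathbb P^1}^{\oplus(r-1)}\oplus\mathcal O_{\mathbb P^1}(f))$ with bundle projection $\pi:\tilde X\to\mathbb P^1$ and tautological bundle $\mathcal O_{\tilde X}(1)$, and $j:\tilde X\to\mathbb P^n$, $n=f+r-1$, the morphism defined by $\mathcal O_{\tilde X}(1)$. Its image $X$ is a rational normal scroll of degree $f$, dimension $r$, which is a cone with vertex $V$ (a linear space with $\operatorname{codim}(V,X)=2$) over a rational normal curve of degree $f$; $j:\tilde X\to X$ is a resolution, an isomorphism over $X_S=X\setminus V$, and $E=j^{-1}(V)$ (reduced) is a prime divisor, the exceptional divisor. $\operatorname{Pic}(\tilde X)=\mathbb Z\tilde H\oplus\mathbb Z\tilde R$ ($\tilde H$ the class of $\mathcal O_{\tilde X}(1)$, $\tilde R$ the class of a fibre of $\pi$). Proper transform: for a prime Weil divisor $D$ on $X$, $\tilde D=\overline{j^{-1}(D\cap X_S)}$ (reduced), extended linearly. Integral total transform: for an effective Weil divisor $D$ on $X$ with $\tilde D\sim a\tilde H+b\tilde R$ (then $b\ge0$), set $q=b/f$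 and $D^*=\tilde D+\lceil q\rceil E$ (an equality of divisors). Set $\epsilon=\lceil q\rceil-q\in[0,1)$; $\epsilon_i$ is this number for $D_i$. *)

(* Abstract combinatorial model of the divisor theory of a
   singular rational normal scroll X and its resolution j : tX -> X. *)
From HB Require Import structures.
From mathcomp Require Import all_boot all_order all_algebra.
Set Implicit Arguments. Unset Strict Implicit. Unset Printing Implicit Defensive.
Import Order.TTheory GRing.Theory Num.Theory.
Local Open Scope ring_scope.

(* Data of the setup: X = rational normal scroll of degree f, dimension r,
   cone with vertex V of codimension 2; tX = P(O^(r-1) + O(f)) with
   Pic tX = Z tH + Z tR. *)
Record scroll_data := ScrollData {
  sc_r : nat;
  sc_f : nat;
  sc_r_ge2 : (2 <= sc_r)%N;
  sc_f_ge2 : (2 <= sc_f)%N;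
  primeX : eqType;
  primeXt : eqType;
  (* the exceptional divisor E = j^{-1}(V) *)
  excE : primeXt;
  ptrans : primeX -> primeXt;
  ptrans_inj : injective ptrans;
  ptrans_neqE : forall p, ptrans p != excE;
  ptrans_onto : forall P, P != excE -> exists p, ptrans p = P;
  (* class of a prime divisor of tX in Pic tX = Z tH + Z tR : (a, b) *)
  clsH : primeXt -> int;
  clsR : primeXt -> int
}.

Section Divisors.
Variable S : scroll_data.

(* An effective Weil divisor on X, as the finite multiset of its prime
   components (with multiplicity). Sum of divisors = concatenation. *)
Definition effdivX := seq (primeX S).

Definition divXt := primeXt S -> int.

Definition proper_transform (D : effdivX) : divXt :=
  fun P => (count (fun p => ptrans p == P) D)%:Z.

Definition pt_a (D : effdivX) : int := \sum_(p <- D) clsH (ptrans p).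
Definition pt_b (D : effdivX) : int := \sum_(p <- D) clsR (ptrans p).

Definition qnum (D : effdivX) : rat := (pt_b D)%:~R / (sc_f S)%:R.

Definition total_transform (D : effdivX) : divXt :=
  fun P => proper_transform D P + Num.ceil (qnum D) * (P == excE S)%:R.

Definition eps (D : effdivX) : rat := (Num.ceil (qnum D))%:~R - qnum D.

End Divisors.

(* The proper transform and the class coordinate b are additive, so q is
   additive too, and the only non-additive term of D^* is ceil q.  Writing
   ceil q_i = q_i + eps_i, the integer ceil q_1 + ceil q_2 exceeds
   q_1 + q_2 by eps_1 + eps_2 in [0, 2): it is the ceiling of q_1 + q_2
   when eps_1 + eps_2 < 1, and one more than that ceiling otherwise. *)
From mathcomp Require Import all_boot all_order all_algebra.
From mathcomp Require Import ring lra.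
Import Order.TTheory GRing.Theory Num.Theory.
Local Open Scope ring_scope.

Section CeilAdditivity.
Variable R : archiRealFieldType.
Implicit Types x y : R.

Lemma ceilD_small_frac x y :
  ((Num.ceil x)%:~R - x) + ((Num.ceil y)%:~R - y) < 1 ->
  Num.ceil (x + y) = Num.ceil x + Num.ceil y.
Proof.
have /andP[lt_x le_x] := ceil_itv x; have /andP[lt_y le_y] := ceil_itv y.
move: lt_x lt_y; rewrite !intrB => lt_x lt_y small.
by apply: ceil_def; rewrite intrB intrD; apply/andP; split; lra.
Qed.

Lemma ceilD_large_frac x y :
  1 <= ((Num.ceil x)%:~R - x) + ((Num.ceil y)%:~R - y) ->
  Num.ceil (x + y) = Num.ceil x + Num.ceil y - 1.
Proof.
have /andP[lt_x le_x] := ceil_itv x; have /andP[lt_y le_y] := ceil_itv y.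
move: lt_x lt_y; rewrite !intrB => lt_x lt_y large.
by apply: ceil_def; rewrite !intrB intrD; apply/andP; split; lra.
Qed.

End CeilAdditivity.

Section TotalTransformCat.
Variables (S : scroll_data) (D1 D2 : effdivX S).

Lemma proper_transform_cat P :
  proper_transform (D1 ++ D2) P = proper_transform D1 P + proper_transform D2 P.
Proof. by rewrite /proper_transform count_cat PoszD. Qed.

Lemma qnum_cat : qnum (D1 ++ D2) = qnum D1 + qnum D2.
Proof. by rewrite /qnum /pt_b big_cat /= intrD mulrDl. Qed.

Lemma total_transform_cat P :
  total_transform (D1 ++ D2) P =
  total_transform D1 P + total_transform D2 P
  + (Num.ceil (qnum D1 + qnum D2) - Num.ceil (qnum D1) - Num.ceil (qnum D2))
    * (P == excE S)%:R.
Proof. rewrite /total_transform proper_transform_cat qnum_cat; ring. Qed.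

End TotalTransformCat.

Theorem lemma4p3 (S : scroll_data) (D1 D2 : effdivX S) :
  (eps D1 + eps D2 < 1 ->
     forall P, total_transform (D1 ++ D2) P
               = total_transform D1 P + total_transform D2 P) /\
  (1 <= eps D1 + eps D2 ->
     forall P, total_transform (D1 ++ D2) P
               = total_transform D1 P + total_transform D2 P
                 - (P == excE S)%:R).
Proof.
split=> [small | large] P; rewrite total_transform_cat.
- by rewrite ceilD_small_frac //; ring.
- by rewrite ceilD_large_frac //; ring.
Qed.
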